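(* Let $a\geq 3$ and $m\geq 1$ be integers. There is a bijective correspondence between right $0$-pyramids of pieces of length $a$ and of size $m$, and $a$-ary trees with $m$ nodes.
   Context: For a positive integer $n$, an $n$-ary tree is a planar rooted tree all of whose vertices have order (degree) $1$ or $n+1$ and whose root has order $1$; the vertices of order $n+1$ are called nodes. A piece is an open interval $]s,s+a[$ with $s\in\mathbb Z$; two pieces are concurrent iff their intervals intersect. A heap is a finite configuration obtained by successively dropping pieces vertically towards the horizontal axis, each coming to rest on the axis or on top of the highest previously placed piece whose interval meets its own; configurations (not dropping orders) are counted. A pyramid is a heap with a unique bottom piece (exactly one piece on the axis); its size is its number of pieces. A right $0$-pyramid is a pyramid whose bottom piece covers $]0,a[$ and is a leftmost piece (no piece covers $]t,t+a[$ with $t<0$). *)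

From HB Require Import structures.
From mathcomp Require Import all_boot all_order all_algebra.
From mathcomp Require Import finmap.
Set Implicit Arguments. Unset Strict Implicit. Unset Printing Implicit Defensive.
Import Order.TTheory GRing.Theory Num.Theory.
Local Open Scope fset_scope.

(* A planar rooted tree: the (planted) root of order 1 is attached to the
   subtree below it; a subtree is a leaf or a node with an ordered list of
   children.  A node has order n+1 (its parent + n children). *)
Inductive ptree : Type := Leaf | Node of seq ptree.

Fixpoint is_nary (n : nat) (t : ptree) : bool :=
  match t with
  | Leaf => true
  | Node ts => (size ts == n) && all (is_nary n) ts
  end.

Fixpoint nb_nodes (t : ptree) : nat :=
  match t with
  | Leaf => 0
  | Node ts => (sumn (map nb_nodes ts)).+1
  end.

Definition nary_tree (n m : nat) : Type :=
  {t : ptree | is_nary n t && (nb_nodes t == m)}.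

(* A placed piece is (s, h): interval ]s, s+a[ resting at level h
   (h = 0 means on the horizontal axis). *)
Definition placed := (int * nat)%type.

Definition concurrent (a : nat) (s t : int) : bool :=
  ((s < t + a%:Z) && (t < s + a%:Z))%R.

Definition drop_level (a : nat) (C : {fset placed}) (s : int) : nat :=
  \max_(p <- enum_fset C | concurrent a p.1 s) p.2.+1.

Definition drop_piece (a : nat) (C : {fset placed}) (s : int) : {fset placed} :=
  (s, drop_level a C s) |` C.

Inductive is_heap (a : nat) : {fset placed} -> Prop :=
  | heap_empty : is_heap a fset0
  | heap_drop C s : is_heap a C -> is_heap a (drop_piece a C s).

Definition is_pyramid (a : nat) (C : {fset placed}) : Prop :=
  is_heap a C /\ #|` [fset p in C | p.2 == 0%N]| = 1%N.

Definition is_right0_pyramid (a : nat) (C : {fset placed}) : Prop :=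
  is_pyramid a C /\ ((0%R, 0%N) \in C) /\ (forall p, p \in C -> (0 <= p.1)%R).

Definition right0_pyramid (a m : nat) : Type :=
  {C : {fset placed} | is_right0_pyramid a C /\ #|` C| = m}.

From HB Require Import structures.
From mathcomp Require Import all_boot all_order all_algebra finmap zify.
From Stdlib Require Import ClassicalEpsilon ProofIrrelevance.
Import Order.TTheory GRing.Theory Num.Theory.
Set Implicit Arguments. Unset Strict Implicit. Unset Printing Implicit Defensive.
Local Open Scope fset_scope.

(* Both sides are in bijection with the codes [j_1; ...; j_m] of naturals with
   [j_1 = 0] and [j_(k+1) < j_k + a].  Dropping pieces at positions
   [j_1, ..., j_m] in this order builds a right 0-pyramid.  Conversely every
   heap is built by a unique word in normal form (commute any piece dropped
   right after a non-concurrent piece on its left, as in the Cartier-Foata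
   normal form); the leftmost top piece identifies the last letter, and for a
   right 0-pyramid the word is such a code.  On the tree side, [j_1] is the
   position of the last non-leaf root of the forest, which is replaced by its
   [a] subtrees, and the rest of the code is read on the new forest. *)

Section HeapsOfWords.

Variable a : nat.
Hypothesis a_gt0 : 0 < a.

(* The head of the word is the last piece dropped. *)
Fixpoint heap_of_word (r : seq int) : {fset placed} :=
  if r is x :: r' then drop_piece a (heap_of_word r') x else fset0.

Lemma concurrentC x y : concurrent a x y = concurrent a y x.
Proof. by rewrite /concurrent andbC. Qed.

Lemma concurrentxx x : concurrent a x x.
Proof. by rewrite /concurrent ltrDl ltz_nat a_gt0. Qed.

Lemma drop_level_gt H x p : p \in H -> concurrent a p.1 x -> p.2 < drop_level a H x.
Proof.
by move=> pH cpx; apply: (@leq_bigmax_seq _ _ (fun q : placed => concurrent a q.1 x)).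
Qed.

Lemma dropped_notin H x : (x, drop_level a H x) \notin H.
Proof.
by apply/negP => /drop_level_gt /(_ (concurrentxx x)); rewrite ltnn.
Qed.

Lemma drop_level0 x : drop_level a fset0 x = 0.
Proof. by rewrite /drop_level big_nil. Qed.

Lemma drop_level_fsetU1 H p y : p \notin H ->
  drop_level a (p |` H) y =
  if concurrent a p.1 y then maxn p.2.+1 (drop_level a H y) else drop_level a H y.
Proof.
move=> pH; rewrite /drop_level big_mkcond /= big_fsetU1 //= -big_mkcond /=.
by case: ifP => _ //; rewrite max0n.
Qed.

Lemma drop_pieceC H x y : ~~ concurrent a x y ->
  drop_piece a (drop_piece a H x) y = drop_piece a (drop_piece a H y) x.
Proof.
move=> nxy; rewrite /drop_piece !drop_level_fsetU1 ?dropped_notin //=.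
by rewrite (negbTE nxy) concurrentC (negbTE nxy) fsetUCA.
Qed.

Lemma card_heap_of_word r : #|` heap_of_word r| = size r.
Proof.
by elim: r => //= x r IH; rewrite /drop_piece cardfsU1 dropped_notin IH.
Qed.

Lemma heap_of_word_is_heap r : is_heap a (heap_of_word r).
Proof. by elim: r => [|x r IH]; [exact: heap_empty | exact: heap_drop]. Qed.

Lemma is_heap_of_word C : is_heap a C -> exists r, C = heap_of_word r.
Proof. by elim => [|C' s _ [r ->]]; [exists [::] | exists (s :: r)]. Qed.

Lemma heap_of_word_suffix u w : heap_of_word w `<=` heap_of_word (u ++ w).
Proof.
elim: u => //= x u IH.
by apply: fsubset_trans IH _; rewrite /drop_piece fsubsetU1.
Qed.

Lemma heap_of_wordP r p : p \in heap_of_word r ->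
  exists u y v, r = u ++ y :: v /\ p = (y, drop_level a (heap_of_word v) y).
Proof.
elim: r => [|x r IH] /=; first by rewrite inE.
rewrite /drop_piece !inE => /orP [/eqP ->|/IH [u [y [v [-> ->]]]]].
  by exists [::], x, r.
by exists (x :: u), y, v.
Qed.

Lemma last_dropped_in u y v :
  (y, drop_level a (heap_of_word v) y) \in heap_of_word (u ++ y :: v).
Proof.
by apply: (fsubsetP (heap_of_word_suffix _ _)); rewrite /= /drop_piece !inE eqxx.
Qed.

Lemma heap_of_word_pos r p : p \in heap_of_word r -> p.1 \in r.
Proof. by case/heap_of_wordP => u [y [v [-> ->]]]; rewrite mem_cat inE eqxx orbT. Qed.

Lemma word_pos_in_heap r x : x \in r -> exists h, (x, h) \in heap_of_word r.
Proof.
by case/splitPr => u v; exists (drop_level a (heap_of_word v) x); apply: last_dropped_in.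
Qed.

(* Normal form of words: a piece dropped right after a piece lying entirely to
   its left is commuted below it, so consecutive letters [x; y] satisfy [x < y + a]. *)
Definition nf_rel : rel int := fun x y => (x < y + a%:Z)%R.

Fixpoint nf_insert (y : int) (r : seq int) : seq int :=
  if r is x :: r' then
    if (y < x + a%:Z)%R then y :: r else x :: nf_insert y r'
  else [:: y].

Definition nf_word (r : seq int) : seq int := foldr nf_insert [::] r.

Lemma heap_of_word_nf_insert y r : heap_of_word (nf_insert y r) = heap_of_word (y :: r).
Proof.
elim: r => //= x r IH; case: ifP => // yx /=.
by rewrite IH /= drop_pieceC // /concurrent yx.
Qed.

Lemma heap_of_nf_word r : heap_of_word (nf_word r) = heap_of_word r.
Proof. by elim: r => //= y r IH; rewrite heap_of_word_nf_insert /= IH. Qed.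

Lemma nf_insert_path x y r :
  nf_rel x y -> path nf_rel x r -> path nf_rel x (nf_insert y r).
Proof.
elim: r x => [|z r IH] x /=; first by move=> ->.
move=> xy /andP [xz zr]; case: ifP => yz /=; first by rewrite xy zr andbT; exact: yz.
by rewrite xz IH //; move/negbT: yz; rewrite /nf_rel -leNgt; lia.
Qed.

Lemma nf_insert_sorted y r : sorted nf_rel r -> sorted nf_rel (nf_insert y r).
Proof.
case: r => //= z r zr; case: ifP => yz /=; first by rewrite zr andbT; exact: yz.
by apply: nf_insert_path => //; move/negbT: yz; rewrite /nf_rel -leNgt; lia.
Qed.

Lemma nf_word_sorted r : sorted nf_rel (nf_word r).
Proof. by elim: r => //= y r; apply: nf_insert_sorted. Qed.

Lemma nf_path_right x u y : path nf_rel x (rcons u y) ->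
  all (fun z => ~~ concurrent a z y) (x :: u) -> (x + a%:Z <= y)%R.
Proof.
elim: u x => [|z u IH] x /=.
  by rewrite /nf_rel /concurrent !andbT; lia.
move=> /andP [xz zu] /andP [nxy nzu]; have := IH z zu nzu.
by move: xz nxy; rewrite /nf_rel /concurrent; lia.
Qed.

Definition is_local_top (C : {fset placed}) (q : placed) :=
  forall p, p \in C -> concurrent a q.1 p.1 -> p.2 <= q.2.

Lemma dropped_local_top x r :
  is_local_top (heap_of_word (x :: r)) (x, drop_level a (heap_of_word r) x).
Proof.
move=> p /=; rewrite /drop_piece !inE => /orP [/eqP -> //|pr] xp.
by apply/ltnW/drop_level_gt; rewrite // concurrentC.
Qed.

Lemma nf_local_top x r q : sorted nf_rel (x :: r) ->
  q \in heap_of_word (x :: r) -> is_local_top (heap_of_word (x :: r)) q ->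
  q = (x, drop_level a (heap_of_word r) x) \/ (x + a%:Z <= q.1)%R.
Proof.
move=> xr; rewrite /= /drop_piece !inE => /orP [/eqP ->|qr qtop]; [by left | right].
have [u [y [v [er eq]]]] := heap_of_wordP qr; rewrite eq /=.
apply: (@nf_path_right x u y).
  by move: xr; rewrite /= er cat_path /= -cats1 cat_path /= => /andP [-> /andP [-> _]].
apply/allP => z zu; apply/negP => zy.
have [u1 [u2 eu]] : exists u1 u2, x :: u = u1 ++ z :: u2.
  by case: (x :: u) / (splitPr zu) => u1 u2; exists u1, u2.
set pz := (z, drop_level a (heap_of_word (u2 ++ y :: v)) z).
have pz_in : pz \in heap_of_word (x :: r).
  by rewrite er -cat_cons eu -catA; apply: last_dropped_in.
have q_in : q \in heap_of_word (u2 ++ y :: v) by rewrite eq; apply: last_dropped_in.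
have lt_qz : q.2 < pz.2 by apply: drop_level_gt q_in _; rewrite eq concurrentC.
have := qtop pz pz_in; rewrite eq /= concurrentC zy => /(_ isT).
by move: lt_qz; rewrite eq /=; lia.
Qed.

Lemma heap_of_word_nf_inj r1 r2 : sorted nf_rel r1 -> sorted nf_rel r2 ->
  heap_of_word r1 = heap_of_word r2 -> r1 = r2.
Proof.
elim: r1 r2 => [|x1 r1 IH] [|x2 r2] //;
  try by move=> _ _ /(congr1 (fun C => #|` C|)); rewrite !card_heap_of_word.
move=> s1 s2 E.
set p1 := (x1, drop_level a (heap_of_word r1) x1).
set p2 := (x2, drop_level a (heap_of_word r2) x2).
have p1_in : p1 \in heap_of_word (x2 :: r2) by rewrite -E /= /drop_piece !inE eqxx.
have p2_in : p2 \in heap_of_word (x1 :: r1) by rewrite E /= /drop_piece !inE eqxx.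
have top1 : is_local_top (heap_of_word (x2 :: r2)) p1 by rewrite -E; apply: dropped_local_top.
have top2 : is_local_top (heap_of_word (x1 :: r1)) p2 by rewrite E; apply: dropped_local_top.
have p12 : p1 = p2.
  have [//|h1] := nf_local_top s2 p1_in top1.
  have [//|h2] := nf_local_top s1 p2_in top2.
  by move: h1 h2 => /=; lia.
have /= <- : p1.1 = x2 by rewrite p12.
congr (_ :: _); apply: IH (path_sorted s1) (path_sorted s2) _.
have := congr1 (fun C => C `\ p1) E; rewrite /= /drop_piece fsetU1K ?dropped_notin //.
by rewrite -/p2 -p12 fsetU1K // p12 dropped_notin.
Qed.

Lemma nf_path_last_right x y l : path nf_rel y l -> (x + a%:Z <= y)%R ->
  all (fun z => ~~ concurrent a x z) l -> (x + a%:Z <= last y l)%R.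
Proof.
elim: l y => //= z l IH y /andP [yz zl] xy /andP [nxz nxl]; apply: IH => //.
by move: yz nxz; rewrite /nf_rel /concurrent; lia.
Qed.

Lemma nf_drop_level_gt0 x r : sorted nf_rel (x :: r) -> all (fun z => 0 <= z)%R (x :: r) ->
  r != [::] -> last 1%R r = 0%R -> 0 < drop_level a (heap_of_word r) x.
Proof.
move=> xr r_ge0 r_nil r_0.
have [y yr xy] : exists2 y, y \in r & concurrent a x y.
  apply/hasP/negPn/negP => /hasPn nxr.
  case: r xr r_ge0 r_nil r_0 nxr => //= y l /andP [xy yl] /andP [x_ge0 _] _ l_0 nxr.
  have xay : (x + a%:Z <= y)%R.
    by move: xy (nxr y (mem_head y l)); rewrite /nf_rel /concurrent; lia.
  have := nf_path_last_right yl xay; rewrite l_0.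
  have -> : all (fun z => ~~ concurrent a x z) l.
    by apply/allP => z zl; apply: nxr; rewrite inE zl orbT.
  by move=> /(_ isT); lia.
have [h yh] := word_pos_in_heap yr.
by have := drop_level_gt (x := x) yh; rewrite /= concurrentC xy => /(_ isT); lia.
Qed.

(* [last 1 r = 0] also forces [r] to be nonempty. *)
Lemma nf_ground_piece r p : sorted nf_rel r -> all (fun z => 0 <= z)%R r ->
  last 1%R r = 0%R -> p \in heap_of_word r -> p.2 = 0 -> p = (0%R, 0).
Proof.
elim: r => //= x r IH xr /andP [x_ge0 r_ge0].
have [-> /= ->|r_nil r_0] := eqVneq r [::].
  by rewrite /drop_piece drop_level0 !inE orbF => /eqP.
have r'_0 : last 1%R r = 0%R by case: r r_nil r_0 {xr r_ge0 IH}.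
rewrite /drop_piece !inE => /orP [/eqP -> /= lvl0|]; last exact: IH (path_sorted xr) r_ge0 r'_0.
by have := nf_drop_level_gt0 xr; rewrite /= x_ge0 r_ge0 lvl0 => /(_ isT r_nil r'_0).
Qed.

Lemma first_dropped_in u z : (z, 0) \in heap_of_word (rcons u z).
Proof. by have := last_dropped_in u z [::]; rewrite cats1 /= drop_level0. Qed.

Lemma origin_in_heap_of_word r : last 1%R r = 0%R -> (0%R, 0) \in heap_of_word r.
Proof.
case/lastP: r => [/eqP|u z]; first by rewrite oner_eq0.
by rewrite last_rcons => <-; apply: first_dropped_in.
Qed.

Lemma nf_word_right0_pyramid r : sorted nf_rel r -> all (fun z => 0 <= z)%R r ->
  last 1%R r = 0%R -> is_right0_pyramid a (heap_of_word r).
Proof.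
move=> nf_r r_ge0 r_0; split; [split|split].
- exact: heap_of_word_is_heap.
- apply/eqP/cardfs1P; exists (0%R, 0); apply/fsetP => p; rewrite !inE.
  apply/andP/eqP => [[p_in /eqP p0]|->]; first exact: nf_ground_piece p_in p0.
  by rewrite origin_in_heap_of_word.
- exact: origin_in_heap_of_word.
- by move=> p /heap_of_word_pos; apply/allP.
Qed.

End HeapsOfWords.

Section CodedForests.

Variable a : nat.

(* [j :: r] codes the forest of [n] trees whose last non-leaf root is the
   [j]-th (from 0); [r] codes the forest of [j + a] trees obtained by replacing
   that root by its [a] subtrees and dropping the trailing leaves. *)
Fixpoint admissible (n : nat) (s : seq nat) : bool :=
  if s is j :: r then (j < n) && admissible (j + a) r else true.

Fixpoint code_forest (n : nat) (s : seq nat) : seq ptree :=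
  if s is j :: r then
    let F := code_forest (j + a) r in
    take j F ++ Node (drop j F) :: nseq (n - j.+1) Leaf
  else nseq n Leaf.

Definition is_leaf (t : ptree) : bool := if t is Leaf then true else false.

Lemma nodes_nseq_Leaf k : sumn (map nb_nodes (nseq k Leaf)) = 0.
Proof. by elim: k. Qed.

Lemma nodes_eq0_all_leaves (F : seq ptree) : sumn (map nb_nodes F) = 0 -> all is_leaf F.
Proof. by elim: F => [|[|ts] F IH] //= /IH. Qed.

Lemma all_leaves_nseq (F : seq ptree) : all is_leaf F -> F = nseq (size F) Leaf.
Proof. by elim: F => [|[|ts] F IH] //= /IH {1}->. Qed.

Lemma last_node_decomp (F : seq ptree) : ~~ all is_leaf F ->
  exists F1 ts k, F = F1 ++ Node ts :: nseq k Leaf.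
Proof.
elim/last_ind: F => [|F t IH] //; rewrite -cats1 all_cat /= andbT.
case: t => [|ts] /=; last by exists F, ts, 0.
rewrite andbT => /IH [F1 [ts [k ->]]]; exists F1, ts, k.+1.
by rewrite -catA /= -[[:: Leaf]]/(nseq 1 Leaf) -nseqD addn1.
Qed.

Lemma take_cons_drop_inj (T : Type) (f : seq T -> T) j (F1 F2 L : seq T) :
  injective f -> j <= size F1 -> j <= size F2 ->
  take j F1 ++ f (drop j F1) :: L = take j F2 ++ f (drop j F2) :: L -> F1 = F2.
Proof.
move=> f_inj j1 j2 E; rewrite -(cat_take_drop j F1) -(cat_take_drop j F2).
have sz1 : size (take j F1) = j by rewrite size_takel.
have sz2 : size (take j F2) = j by rewrite size_takel.
have := congr1 (take j) E; rewrite !take_size_cat // => ->.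
by have := congr1 (drop j) E; rewrite !drop_size_cat // => -[/f_inj ->].
Qed.

Lemma size_code_forest n s : admissible n s -> size (code_forest n s) = n.
Proof.
elim: s n => [|j r IH] n /=; first by rewrite size_nseq.
case/andP => jn r_ok; rewrite size_cat /= size_nseq size_takel ?IH ?leq_addr //; lia.
Qed.

Lemma code_forest_nary n s : admissible n s -> all (is_nary a) (code_forest n s).
Proof.
elim: s n => [|j r IH] n /=; first by rewrite all_nseq orbT.
case/andP => jn r_ok; have := IH _ r_ok.
rewrite -{1}(cat_take_drop j (code_forest (j + a) r)) !all_cat /= all_nseq orbT.
by case/andP => -> ->; rewrite size_drop size_code_forest // addKn eqxx.
Qed.

Lemma nodes_code_forest n s : admissible n s ->
  sumn (map nb_nodes (code_forest n s)) = size s.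
Proof.
elim: s n => [|j r IH] n /=; first by rewrite nodes_nseq_Leaf.
case/andP => jn r_ok; rewrite map_cat sumn_cat /= nodes_nseq_Leaf addn0.
have := IH _ r_ok; rewrite -{1}(cat_take_drop j (code_forest (j + a) r)) map_cat sumn_cat.
lia.
Qed.

Lemma code_forest_inj n s1 s2 : admissible n s1 -> admissible n s2 ->
  code_forest n s1 = code_forest n s2 -> s1 = s2.
Proof.
have last_node m j r : find (predC is_leaf) (rev (code_forest m (j :: r))) = m - j.+1.
  rewrite /= rev_cat rev_cons rev_nseq -cats1 find_cat has_cat /= orbT.
  by rewrite find_cat has_nseq /= andbF size_nseq addn0.
elim: s1 n s2 => [|j1 r1 IH] n [|j2 r2] //.
- by move=> _ _ /(congr1 (all is_leaf)); rewrite /= all_cat /= andbF all_nseq orbT.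
- by move=> _ _ /(congr1 (all is_leaf)); rewrite /= all_cat /= andbF all_nseq orbT.
move=> ok1 ok2 E.
have ej : j1 = j2.
  have := last_node n j1 r1; rewrite E last_node.
  by move: ok1 ok2 => /andP [? _] /andP [? _]; lia.
subst j2; move: ok1 ok2 => /andP [_ ok1] /andP [_ ok2]; congr (_ :: _).
apply: (IH _ _ ok1 ok2); apply: take_cons_drop_inj E; first by move=> ? ? [].
  by rewrite (size_code_forest ok1) leq_addr.
by rewrite (size_code_forest ok2) leq_addr.
Qed.

Lemma code_forest_surj F : all (is_nary a) F -> exists2 s,
  admissible (size F) s & code_forest (size F) s = F /\ size s = sumn (map nb_nodes F).
Proof.
move nodes_F : (sumn _) => N; elim: N F nodes_F => [|N IH] F nodes_F F_nary.
  by exists [::]; rewrite //= -all_leaves_nseq // nodes_eq0_all_leaves.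
have : ~~ all is_leaf F.
  by apply/negP => /all_leaves_nseq EF; move: nodes_F; rewrite EF nodes_nseq_Leaf.
case/last_node_decomp => F1 [ts [k EF]]; subst F.
move: nodes_F F_nary; rewrite map_cat sumn_cat /= nodes_nseq_Leaf all_cat /= all_nseq orbT.
move=> nodes_F /andP [F1_nary /andP [/andP [/eqP size_ts ts_nary] _]].
have nodes_F1ts : sumn (map nb_nodes (F1 ++ ts)) = N by rewrite map_cat sumn_cat; lia.
have F1ts_nary : all (is_nary a) (F1 ++ ts) by rewrite all_cat F1_nary.
have [s s_ok [s_F size_s]] := IH _ nodes_F1ts F1ts_nary.
rewrite size_cat size_ts in s_ok s_F.
exists (size F1 :: s); rewrite /= size_cat /= size_nseq.
- by rewrite s_ok andbT; lia.
- split; last by rewrite size_s.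
  by rewrite s_F take_size_cat // drop_size_cat //; congr (_ ++ _ :: nseq _ _); lia.
Qed.

End CodedForests.

Lemma sval_inj (T : Type) (P : T -> Prop) : injective (@sval T P).
Proof. by move=> u v; apply: eq_sig_hprop => x; apply: proof_irrelevance. Qed.

Lemma inj_surj_bij (A B : Type) (f : A -> B) :
  injective f -> (forall y, exists x, f x = y) -> bijective f.
Proof.
move=> f_inj f_surj.
pose g y := sval (constructive_indefinite_description _ (f_surj y)).
have gK : cancel g f by move=> y; rewrite /g; case: constructive_indefinite_description.
by exists g => // x; apply: f_inj; rewrite gK.
Qed.

Lemma admissible_sorted a n s :
  admissible a n s = (if s is j :: _ then j < n else true) && sorted (fun j k => k < j + a) s.
Proof. by elim: s n => //= j r IH n; rewrite IH; case: r {IH}. Qed.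

(* A code is read backwards as a word of pieces: its first letter is the
   position of the bottom piece. *)
Definition code_word (s : seq nat) : seq int := rev (map Posz s).

Lemma sorted_code_word a s :
  sorted (nf_rel a) (code_word s) = sorted (fun j k => k < j + a) s.
Proof.
rewrite rev_sorted sorted_map; apply: eq_sorted => x y.
by rewrite /relpre /nf_rel /=; lia.
Qed.

Definition code (a m : nat) : Type := {s : seq nat | admissible a 1 s && (size s == m)}.

Lemma code_right0_pyramid a m s : 0 < a -> 1 <= m -> admissible a 1 s && (size s == m) ->
  is_right0_pyramid a (heap_of_word a (code_word s)) /\ #|` heap_of_word a (code_word s)| = m.
Proof.
move=> a_gt0 m_gt0 /andP [s_ok /eqP size_s].
rewrite card_heap_of_word // size_rev size_map size_s; split => //.
move: s_ok; rewrite admissible_sorted -sorted_code_word.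
case: s size_s => [size_s|j r _]; first by rewrite -size_s in m_gt0.
case/andP=> j0 nf_s.
apply: nf_word_right0_pyramid => //.
- by rewrite all_rev all_map; apply/allP.
- by rewrite /code_word rev_cons last_rcons; case: (j) j0.
Qed.

Lemma right0_pyramid_code a m C : 0 < a -> is_right0_pyramid a C -> #|` C| = m ->
  exists2 s, admissible a 1 s && (size s == m) & heap_of_word a (code_word s) = C.
Proof.
move=> a_gt0 [[C_heap C_1] [C_00 C_ge0]] size_C.
have [w wC nf_w] : exists2 w, heap_of_word a w = C & sorted (nf_rel a) w.
  have [r ->] := is_heap_of_word C_heap.
  by exists (nf_word a r); rewrite ?heap_of_nf_word ?nf_word_sorted.
have w_ge0 : all (fun z => 0 <= z)%R w.
  by apply/allP => x /(word_pos_in_heap a) [h]; rewrite wC => /C_ge0.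
have codeK : code_word (rev (map absz w)) = w.
  rewrite /code_word map_rev revK -map_comp map_id_in // => x xw.
  by rewrite /= gez0_abs //; apply: (allP w_ge0).
exists (rev (map absz w)); last by rewrite codeK.
rewrite admissible_sorted -sorted_code_word codeK nf_w andbT size_rev size_map.
rewrite -(card_heap_of_word a_gt0) wC size_C eqxx andbT.
case/lastP: w wC {nf_w w_ge0 codeK} => [wC|u z wC]; first by rewrite -wC in C_00.
have /eqP/cardfs1P [p Ep] := C_1.
have : (z, 0) \in [fset p in C | p.2 == 0] by rewrite !inE -wC first_dropped_in.
have : (0%R, 0) \in [fset p in C | p.2 == 0] by rewrite !inE C_00.
by rewrite Ep map_rcons rev_rcons !inE => /eqP <- /eqP [->].
Qed.

Lemma code_pyramid_bij a m : 0 < a -> 1 <= m ->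
  exists g : code a m -> right0_pyramid a m, bijective g.
Proof.
move=> a_gt0 m_gt0.
exists (fun s => exist _ _ (code_right0_pyramid a_gt0 m_gt0 (svalP s))).
apply: inj_surj_bij => [[s1 ok1] [s2 ok2] /(congr1 sval) /= E|[C [C_pyr size_C]]].
  apply: sval_inj => /=; move: ok1 ok2 E => /andP [ok1 _] /andP [ok2 _].
  move=> /(heap_of_word_nf_inj a_gt0); rewrite !sorted_code_word.
  move: ok1 ok2; rewrite !admissible_sorted => /andP [_ ->] /andP [_ ->] /(_ isT isT).
  by move/(can_inj revK)/(inj_map (can_inj absz_nat)).
have [s s_ok sC] := right0_pyramid_code a_gt0 C_pyr size_C.
by exists (exist _ s s_ok); apply: sval_inj.
Qed.

Lemma code_tree_bij a m : exists h : code a m -> nary_tree a m, bijective h.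
Proof.
have tree_ok s : admissible a 1 s && (size s == m) ->
    let t := head Leaf (code_forest a 1 s) in is_nary a t && (nb_nodes t == m).
  case/andP => s_ok /eqP <-; rewrite -(nodes_code_forest s_ok).
  have := code_forest_nary s_ok; have := size_code_forest s_ok.
  by case: (code_forest a 1 s) => [|t [|]] //= _ /andP [-> _]; rewrite addn0 eqxx.
exists (fun s : code a m =>
  exist _ (head Leaf (code_forest a 1 (sval s))) (tree_ok _ (svalP s)) : nary_tree a m).
have single s : admissible a 1 s -> code_forest a 1 s = [:: head Leaf (code_forest a 1 s)].
  by move/size_code_forest; case: (code_forest a 1 s) => [|t [|]].
apply: inj_surj_bij => [[s1 ok1] [s2 ok2] /(congr1 sval) /= E|[t t_ok]].
  apply: sval_inj => /=; move: ok1 ok2 => /andP [ok1 _] /andP [ok2 _].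
  by apply: (code_forest_inj ok1 ok2); rewrite single // [RHS]single // E.
have /andP [t_nary /eqP nodes_t] := t_ok.
have [s s_ok [s_t size_s]] : exists2 s, admissible a 1 s &
    code_forest a 1 s = [:: t] /\ size s = sumn (map nb_nodes [:: t]).
  by apply: (@code_forest_surj a [:: t]); rewrite /= t_nary.
have s_ok' : admissible a 1 s && (size s == m) by rewrite s_ok size_s /= addn0 nodes_t eqxx.
by exists (exist _ s s_ok'); apply: sval_inj; rewrite /= s_t.
Qed.

Theorem proposition2 (a m : nat) :
  3 <= a -> 1 <= m ->
  exists f : right0_pyramid a m -> nary_tree a m, bijective f.
Proof.
move=> a_ge3 m_gt0; have a_gt0 : 0 < a by apply: leq_trans a_ge3.
have [g [g' gK g'K]] := code_pyramid_bij a_gt0 m_gt0.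
have [h h_bij] := code_tree_bij a m.
by exists (h \o g'); apply: bij_comp h_bij _; exists g.
Qed.
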